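(* For all positive integers $n$ and $q$, let $Q := 2q+1$. Then $$f(n,q) \leq {}^{n-1}Q := Q^{Q^{\cdot^{\cdot^{\cdot^{Q}}}}},$$ where $Q$ occurs $n-1$ times in the exponential tower (with the convention that the tower of height $0$ equals $1$).
   Context: A $q$-ary word is a finite string of characters over an alphabet of $q$ letters; the empty word is $\varepsilon$ and words form a semigroup under concatenation. $V$ is a subword of $W$ if $W = UVU'$ for some (possibly empty) words $U,U'$. A word $W$ is an instance of a word $V = x_0x_1\cdots x_{m-1}$ (each $x_i$ a letter) if $W = A_0A_1\cdots A_{m-1}$ with each $A_i$ nonempty and $A_i = A_j$ whenever $x_i = x_j$ (equivalently, $W=\phi(V)$ for a semigroup homomorphism $\phi$ sending letters to nonempty words). A word $U$ encounters $V$ if some subword of $U$ is an instance of $V$; otherwise $U$ avoids $V$. The Zimin words are defined by $Z_0 := \varepsilon$ and $Z_{n+1} := Z_n x_n Z_n$ for distinct letters $x_0,x_1,\dots$ (so $Z_1 = a$, $Z_2 = aba$, $Z_3 = abacaba$, ...). For positive integers $n,q$, $f(n,q)$ denotes the smallest integer $M$ such that every $q$-ary word of length $M$ encounters $Z_n$. *)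

From mathcomp Require Import all_boot.
Set Implicit Arguments. Unset Strict Implicit. Unset Printing Implicit Defensive.

Fixpoint zimin (n : nat) : seq nat :=
  if n is k.+1 then zimin k ++ k :: zimin k else [::].

Definition instance_of (T : Type) (W : seq T) (V : seq nat) : Prop :=
  exists phi : nat -> seq T,
    (forall x, x \in V -> phi x <> [::]) /\ W = flatten (map phi V).

Definition encounters (T : Type) (U : seq T) (V : seq nat) : Prop :=
  exists A S B : seq T, U = A ++ S ++ B /\ instance_of S V.

Definition all_encounter (n q M : nat) : Prop :=
  forall w : seq 'I_q, size w = M -> encounters w (zimin n).

Definition is_f (n q M : nat) : Prop :=
  all_encounter n q M /\ (forall M', all_encounter n q M' -> M <= M').

Fixpoint tower (Q k : nat) : nat :=
  if k is j.+1 then Q ^ tower Q j else 1.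

From mathcomp Require Import all_boot zify.
From Stdlib Require Import Classical Wf_nat.

Set Implicit Arguments. Unset Strict Implicit. Unset Printing Implicit Defensive.

(* If every q-ary word of length M encounters Z_n, cut a word of length
   (M+1) q^M + M into q^M + 1 blocks of length M separated by single letters.
   By pigeonhole two blocks U coincide; U encounters Z_n, and the nonempty
   stretch between the two occurrences of that instance of Z_n (it contains a
   separator) is the image of the new letter of Z_{n+1} = Z_n x_n Z_n.  Since
   (M+1) q^M + M <= (2q+1)^M, iterating from f(1,q) = 1 gives the tower. *)

Lemma mem_zimin_lt n x : x \in zimin n -> x < n.
Proof.
elim: n => [|n IHn] //=; rewrite mem_cat inE.
by case/or3P => [/IHn | /eqP-> | /IHn]; lia.
Qed.

Lemma instance_ziminS (T : Type) n (S X : seq T) :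
  instance_of S (zimin n) -> X <> [::] ->
  instance_of (S ++ X ++ S) (zimin n.+1).
Proof.
case=> phi [phi_ne ->] X_ne.
pose psi x := if x == n then X else phi x.
have psi_phi : {in zimin n, psi =1 phi}.
  by move=> x /mem_zimin_lt; rewrite /psi ltn_neqAle => /andP[/negbTE ->].
exists psi; split.
  move=> x; rewrite mem_cat inE => /or3P[Zx | /eqP-> | Zx].
  - by rewrite psi_phi //; apply: phi_ne.
  - by rewrite /psi eqxx.
  - by rewrite psi_phi //; apply: phi_ne.
have /eq_in_map map_psi := psi_phi.
by rewrite /= map_cat /= map_psi flatten_cat /= /psi eqxx.
Qed.

Lemma encounters_ziminS (T : Type) n (A U X B : seq T) :
  encounters U (zimin n) -> X <> [::] ->
  encounters (A ++ U ++ X ++ U ++ B) (zimin n.+1).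
Proof.
case=> [A' [S [B' [-> inst_S]]]] X_ne.
exists (A ++ A'), (S ++ (B' ++ X ++ A') ++ S), (B' ++ B); split.
  by rewrite -!catA.
by apply: instance_ziminS inst_S _; case: (B') => //; case: (X) X_ne.
Qed.

Lemma separated_factors (T : Type) (s u : seq T) m p r :
  p + m < r <= size s -> take m (drop p s) = u -> take m (drop r s) = u ->
  exists A X B, X <> [::] /\ s = A ++ u ++ X ++ u ++ B.
Proof.
case/andP=> lt_pm_r le_r_s u_at_p u_at_r.
exists (take p s), (take (r - (p + m)) (drop (p + m) s)), (drop (r + m) s).
split.
  by move/(congr1 size); rewrite size_take_min size_drop /=; lia.
rewrite -{1}(cat_take_drop p s) -{1}(cat_take_drop m (drop p s)) u_at_p.
rewrite drop_drop -{1}(cat_take_drop (r - (p + m)) (drop (m + p) s)).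
rewrite drop_drop (_ : r - (p + m) + (m + p) = r); last by lia.
by rewrite -{1}(cat_take_drop m (drop r s)) u_at_r drop_drop (addnC m p) (addnC m r).
Qed.

Lemma take_drop_mkseq (T : Type) (x0 : T) (s : seq T) p m :
  p + m <= size s -> take m (drop p s) = mkseq (fun k => nth x0 s (p + k)) m.
Proof.
move=> le_pm_s; apply: (eq_from_nth (x0 := x0)).
  by rewrite size_take_min size_drop size_mkseq; lia.
move=> k; rewrite size_take_min size_drop => lt_k.
have lt_k_m : k < m by lia.
by rewrite nth_take // nth_drop nth_mkseq.
Qed.

Lemma pigeonhole (T : finType) n (f : 'I_n -> T) :
  #|T| < n -> exists i j : 'I_n, i < j /\ f i = f j.
Proof.
move=> card_T; have : ~~ injectiveb f.
  by apply/negP => /injectiveP/leq_card; rewrite card_ord leqNgt card_T.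
case/injectivePn => i [j]; rewrite neq_ltn => /orP[] lt_ij fij.
- by exists i, j.
- by exists j, i.
Qed.

Definition zimin_unavoidable q n L :=
  forall w : seq 'I_q, L <= size w -> encounters w (zimin n).

Lemma zimin0_unavoidable q : zimin_unavoidable q 0 0.
Proof.
move=> w _; exists [::], [::], w; split => //.
by exists (fun _ => [::]).
Qed.

Lemma zimin_unavoidableS q n M : 0 < q ->
  zimin_unavoidable q n M -> zimin_unavoidable q n.+1 (M.+1 * q ^ M + M).
Proof.
move=> q_gt0 unavoid w size_w; pose x0 : 'I_q := Ordinal q_gt0.
pose block (i : 'I_(q ^ M).+1) := take M (drop (i * M.+1) w).
pose word (i : 'I_(q ^ M).+1) := [ffun k : 'I_M => nth x0 w (i * M.+1 + k)].
have block_fits (i : 'I_(q ^ M).+1) : i * M.+1 + M <= size w.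
  by have := ltn_ord i; nia.
have blockE i : block i = codom (word i).
  rewrite /block (take_drop_mkseq x0 (block_fits i)) codomE /mkseq.
  by rewrite -val_enum_ord -map_comp; apply: eq_map => k; rewrite /= ffunE.
have [i [j [lt_ij word_ij]]] : exists i j : 'I_(q ^ M).+1, i < j /\ word i = word j.
  by apply: pigeonhole; rewrite card_ffun !card_ord.
have fits_ij : i * M.+1 + M < j * M.+1 <= size w.
  by have := block_fits j; nia.
have block_ij : block j = block i by rewrite !blockE word_ij.
have [A [X [B [X_ne ->]]]] := separated_factors fits_ij (erefl (block i)) block_ij.
apply: encounters_ziminS X_ne; apply: unavoid.
by rewrite /block size_take_min size_drop; have := block_fits i; lia.
Qed.

Lemma blocks_bound q M : 0 < q -> M.+1 * q ^ M + M <= (2 * q + 1) ^ M.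
Proof.
move=> q_gt0; elim: M => [|[|M] IHM]; rewrite ?expn0 ?expn1; try lia.
rewrite (expnS q) (expnS (2 * q + 1)).
by move: IHM; set a := q ^ M.+1; set b := (2 * q + 1) ^ M.+1; nia.
Qed.

Lemma zimin_unavoidable_tower q k : 0 < q ->
  zimin_unavoidable q k.+1 (tower (2 * q + 1) k).
Proof.
move=> q_gt0; elim: k => [|k IHk] w size_w.
  by apply: (zimin_unavoidableS q_gt0 (@zimin0_unavoidable q)); rewrite expn0.
apply: (zimin_unavoidableS q_gt0 IHk).
exact: leq_trans (blocks_bound _ q_gt0) size_w.
Qed.

Lemma exists_least_le (P : nat -> Prop) T :
  P T -> exists M, (P M /\ forall M', P M' -> M <= M') /\ M <= T.
Proof.
move=> PT; have [M [[PM M_least] _]] :=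
  dec_inh_nat_subset_has_unique_least_element P (fun m => classic (P m)) (ex_intro _ T PT).
have M_min M' : P M' -> M <= M' by move/M_least/leP.
by exists M; split; [split | apply: M_min].
Qed.

Theorem mainTheorem1 (n q : nat) (hn : 0 < n) (hq : 0 < q) :
  exists M : nat, is_f n q M /\ M <= tower (2 * q + 1) (n - 1).
Proof.
case: n hn => // k _; rewrite subn1 /=.
apply: exists_least_le => w size_w.
by apply: zimin_unavoidable_tower; rewrite // size_w.
Qed.
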